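(* Let $a,b\in\mathbb{C}$ with $\Re(b)>0$, $\Re(b+a)>0$, $\Re(b-a)>0$, $\frac32\pm\frac{a}{2b}\notin\mathbb{Z}_0^-$ and $\frac ab\notin\{\pm1,\pm3,\pm5,\dots\}$. Then $$ {}_4F_3\!\left(\begin{matrix}2,\ 2,\ \frac12+\frac{a}{2b},\ \frac12-\frac{a}{2b}\\ 1,\ \frac52+\frac{a}{2b},\ \frac52-\frac{a}{2b}\end{matrix};\,1\right) =\frac{9b^2-a^2}{8b^2}\;{}_3F_2\!\left(\begin{matrix}1,\ \frac12-\frac{a}{2b},\ \frac12+\frac{a}{2b}\\ \frac32-\frac{a}{2b},\ \frac32+\frac{a}{2b}\end{matrix};\,1\right). $$
   Context: $\mathbb{Z}_0^-=\{0,-1,-2,\dots\}$. The Pochhammer symbol is $(\lambda)_0=1$, $(\lambda)_n=\lambda(\lambda+1)\cdots(\lambda+n-1)$ for $n\ge1$. The generalized hypergeometric series is ${}_pF_q\!\left(\begin{matrix}\alpha_1,\dots,\alpha_p\\ \beta_1,\dots,\beta_q\end{matrix};z\right)=\sum_{n=0}^\infty\frac{(\alpha_1)_n\cdots(\alpha_p)_n}{(\beta_1)_n\cdots(\beta_q)_n}\frac{z^n}{n!}$ (with no $\beta_j\in\mathbb{Z}_0^-$). *)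

From Stdlib Require Import Reals ZArith List.
Import ListNotations.
Open Scope R_scope.

Record Cx : Type := mkC { Re : R ; Im : R }.

Definition RtoC (x : R) : Cx := mkC x 0.
Definition Cadd (z w : Cx) : Cx := mkC (Re z + Re w) (Im z + Im w).
Definition Copp (z : Cx) : Cx := mkC (- Re z) (- Im z).
Definition Csub (z w : Cx) : Cx := Cadd z (Copp w).
Definition Cmul (z w : Cx) : Cx :=
  mkC (Re z * Re w - Im z * Im w) (Re z * Im w + Im z * Re w).
Definition Cinv (z : Cx) : Cx :=
  mkC (Re z / (Re z * Re z + Im z * Im z))
      (- Im z / (Re z * Re z + Im z * Im z)).
Definition Cdiv (z w : Cx) : Cx := Cmul z (Cinv w).

Fixpoint Cpow (z : Cx) (n : nat) : Cx :=
  match n with O => RtoC 1 | S m => Cmul z (Cpow z m) end.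

Fixpoint poch (l : Cx) (n : nat) : Cx :=
  match n with
  | O => RtoC 1
  | S m => Cmul (poch l m) (Cadd l (RtoC (INR m)))
  end.

Definition prod_poch (ls : list Cx) (n : nat) : Cx :=
  fold_right (fun l acc => Cmul (poch l n) acc) (RtoC 1) ls.

Definition hyp_term (alphas betas : list Cx) (z : Cx) (n : nat) : Cx :=
  Cdiv (Cmul (Cdiv (prod_poch alphas n) (prod_poch betas n)) (Cpow z n))
       (RtoC (INR (fact n))).

Fixpoint Cpartial (f : nat -> Cx) (n : nat) : Cx :=
  match n with O => RtoC 0 | S m => Cadd (Cpartial f m) (f m) end.

Definition Cseries_to (f : nat -> Cx) (l : Cx) : Prop :=
  Un_cv (fun n => Re (Cpartial f n)) (Re l) /\
  Un_cv (fun n => Im (Cpartial f n)) (Im l).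

Definition pFq_sum (alphas betas : list Cx) (z s : Cx) : Prop :=
  Cseries_to (hyp_term alphas betas z) s.

(* Put c = a/(2b), u = 1/2 - c and v = 1/2 + c, so that u + v = 1 and the
   prefactor (9b^2 - a^2)/(8b^2) equals K = (u+1)(v+1)/2.  The n-th terms of
   the two series simplify to t_n = uv/((u+n)(v+n)) and
   (n+1)^2 u(u+1) v(v+1) / ((u+n)(u+n+1)(v+n)(v+n+1)), and because u + v = 1 the
   latter equals K (t_n - (T_{n+1} - T_n)) with T_n = n t_n.  As t_n = O(1/n^2)
   and T_n = O(1/n), the 4F3 series telescopes to K times the 3F2 series. *)

From Stdlib Require Import Reals ZArith List Lia Lra.
From Coquelicot Require Import Coquelicot.
Import ListNotations.
Open Scope R_scope.

Local Notation RC := Complex.RtoC.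

Definition toC (z : Cx) : C := (Re z, Im z).
Definition ofC (z : C) : Cx := mkC (fst z) (snd z).

Lemma toC_ofC (z : C) : toC (ofC z) = z.
Proof. now destruct z. Qed.

Lemma toC_inj (z w : Cx) : toC z = toC w -> z = w.
Proof. destruct z, w; unfold toC; simpl; now intros [= -> ->]. Qed.

Lemma toC_sub (z w : Cx) : toC (Csub z w) = (toC z - toC w)%C.
Proof. reflexivity. Qed.

Lemma toC_mul (z w : Cx) : toC (Cmul z w) = (toC z * toC w)%C.
Proof. reflexivity. Qed.

Lemma toC_RtoC (x : R) : toC (RtoC x) = RC x.
Proof. reflexivity. Qed.

Lemma toC_div (z w : Cx) : toC (Cdiv z w) = (toC z / toC w)%C.
Proof.
  assert (Hinv : toC (Cinv w) = (/ toC w)%C).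
  { unfold toC, Cinv, Complex.Cinv; simpl; f_equal; f_equal; ring. }
  change (toC z * toC (Cinv w) = toC z * / toC w)%C. now rewrite Hinv.
Qed.

Open Scope C_scope.

Fixpoint cpoch (x : C) (n : nat) : C :=
  match n with O => 1 | S m => cpoch x m * (x + INR m) end.

Lemma toC_poch (x : Cx) (n : nat) : toC (poch x n) = cpoch (toC x) n.
Proof. induction n as [|n IH]; [reflexivity|]. cbn [poch cpoch]. now rewrite <- IH. Qed.

Definition cprod_poch (xs : list C) (n : nat) : C :=
  fold_right (fun x acc => cpoch x n * acc) 1 xs.

Definition chyp_term1 (alphas betas : list C) (n : nat) : C :=
  cprod_poch alphas n / cprod_poch betas n / cpoch 1 n.

Lemma cpoch_one (n : nat) : cpoch 1 n = INR (fact n).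
Proof.
  induction n as [|n IH]; [reflexivity|]. cbn [cpoch]. rewrite IH.
  change (fact (S n)) with (S n * fact n)%nat.
  rewrite mult_INR, S_INR, RtoC_mult, RtoC_plus. ring.
Qed.

Lemma toC_hyp_term1 (alphas betas : list Cx) (n : nat) :
  toC (hyp_term alphas betas (RtoC 1) n)
  = chyp_term1 (map toC alphas) (map toC betas) n.
Proof.
  assert (Hprod : forall xs, toC (prod_poch xs n) = cprod_poch (map toC xs) n).
  { induction xs as [|x xs IH]; [reflexivity|]. cbn [map].
    change (toC (poch x n) * toC (prod_poch xs n)
            = cpoch (toC x) n * cprod_poch (map toC xs) n).
    now rewrite toC_poch, IH. }
  assert (Hpow : forall m, toC (Cpow (RtoC 1) m) = 1).
  { induction m as [|m IH]; [reflexivity|]. cbn [Cpow].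
    change (RC 1 * toC (Cpow (RtoC 1) m) = 1). rewrite IH. ring. }
  unfold hyp_term, chyp_term1. rewrite !toC_div, <- !Hprod.
  change (toC (Cmul ?z ?w)) with (toC z * toC w). rewrite toC_div, Hpow, cpoch_one.
  change (toC (RtoC ?x)) with (RC x). now rewrite Cmult_1_r.
Qed.

Definition not_nonpos_int (x : C) : Prop := forall k : nat, x + INR k <> 0.

Lemma not_nonpos_int_succ (x : C) : not_nonpos_int x -> not_nonpos_int (x + 1).
Proof. intros H k E. apply (H (S k)). rewrite S_INR, RtoC_plus, <- E. ring. Qed.

Lemma not_nonpos_int_pred (x : C) :
  x <> 0 -> not_nonpos_int (x + 1) -> not_nonpos_int x.
Proof.
  intros H0 H [|k] E; [apply H0; rewrite <- E; simpl; ring|].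
  apply (H k). rewrite <- E, S_INR, RtoC_plus. ring.
Qed.

Lemma not_nonpos_int_pos (x : R) : (0 < x)%R -> not_nonpos_int x.
Proof.
  intros Hx k E. rewrite <- RtoC_plus in E. apply RtoC_inj in E.
  pose proof (pos_INR k). lra.
Qed.

Lemma cpoch_neq0 (x : C) (n : nat) : not_nonpos_int x -> cpoch x n <> 0.
Proof. intros H. induction n; cbn [cpoch]; [apply C1_nz|now apply Cmult_neq_0]. Qed.

Lemma cpoch_succ_shift (x : C) (n : nat) :
  cpoch x n * (x + INR n) = x * cpoch (x + 1) n.
Proof.
  induction n as [|n IH]; cbn [cpoch]; [simpl; ring|].
  rewrite S_INR, RtoC_plus.
  transitivity (cpoch x n * (x + INR n) * (x + 1 + INR n)); [ring|].
  rewrite IH. ring.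
Qed.

Lemma cpoch_two (n : nat) : cpoch 2 n = cpoch 1 n * (1 + INR n).
Proof.
  rewrite cpoch_succ_shift, Cmult_1_l, <- RtoC_plus.
  apply (f_equal (fun x => cpoch (RC x) n)). lra.
Qed.

Lemma cpoch_ratio_succ (x : C) (n : nat) : not_nonpos_int x ->
  cpoch x n = x * cpoch (x + 1) n / (x + INR n).
Proof. intros H. rewrite <- cpoch_succ_shift. field. apply H. Qed.

Lemma add_one_one (x : C) : x + 1 + 1 = x + 2.
Proof. rewrite <- Cplus_assoc, <- RtoC_plus. do 2 apply f_equal. lra. Qed.

Lemma cpoch_ratio_succ2 (x : C) (n : nat) : not_nonpos_int x ->
  cpoch x n = x * (x + 1) * cpoch (x + 2) n / ((x + INR n) * (x + 1 + INR n)).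
Proof.
  intros H. pose proof (not_nonpos_int_succ x H) as H1.
  rewrite <- add_one_one.
  rewrite (cpoch_ratio_succ x), (cpoch_ratio_succ (x + 1)) by assumption.
  field. split; [apply H1|apply H].
Qed.

Section HypergeometricTerms.

Variables u v : C.
Hypotheses (Hu : not_nonpos_int u) (Hv : not_nonpos_int v).

Definition term3F2 (n : nat) : C := u * v / ((u + INR n) * (v + INR n)).

Definition term4F3 (n : nat) : C :=
  (1 + INR n) * (1 + INR n) * (u * (u + 1)) * (v * (v + 1))
  / ((u + INR n) * (u + 1 + INR n) * ((v + INR n) * (v + 1 + INR n))).

Lemma chyp_term1_3F2 (n : nat) :
  chyp_term1 [RC 1; u; v] [u + 1; v + 1] n = term3F2 n.
Proof.
  unfold chyp_term1, cprod_poch, term3F2; cbn [fold_right].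
  rewrite (cpoch_ratio_succ u), (cpoch_ratio_succ v) by assumption.
  pose proof (cpoch_neq0 _ n (not_nonpos_int_succ _ Hu)).
  pose proof (cpoch_neq0 _ n (not_nonpos_int_succ _ Hv)).
  pose proof (cpoch_neq0 1 n (not_nonpos_int_pos 1 Rlt_0_1)).
  field; auto.
Qed.

Lemma chyp_term1_4F3 (n : nat) :
  chyp_term1 [RC 2; RC 2; v; u] [RC 1; v + 2; u + 2] n = term4F3 n.
Proof.
  unfold chyp_term1, cprod_poch, term4F3; cbn [fold_right].
  rewrite cpoch_two, (cpoch_ratio_succ2 u), (cpoch_ratio_succ2 v) by assumption.
  pose proof (cpoch_neq0 _ n (not_nonpos_int_succ _ (not_nonpos_int_succ _ Hu))).
  pose proof (cpoch_neq0 _ n (not_nonpos_int_succ _ (not_nonpos_int_succ _ Hv))).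
  pose proof (cpoch_neq0 1 n (not_nonpos_int_pos 1 Rlt_0_1)).
  pose proof (not_nonpos_int_succ _ Hu n). pose proof (not_nonpos_int_succ _ Hv n).
  rewrite !add_one_one in *. field. repeat split; auto.
Qed.

Definition tail3F2 (n : nat) : C := INR n * term3F2 n.

Hypothesis Huv : u + v = 1.

Lemma term4F3_telescoping (n : nat) :
  term4F3 n = (u + 1) * (v + 1) / 2
              * (term3F2 n - (tail3F2 (S n) - tail3F2 n)).
Proof.
  assert (Ev : v = 1 - u) by (rewrite <- Huv; ring).
  pose proof (Hu n) as Hun. pose proof (Hv n) as Hvn.
  pose proof (not_nonpos_int_succ _ Hu n). pose proof (not_nonpos_int_succ _ Hv n).
  unfold term4F3, tail3F2, term3F2. rewrite S_INR, RtoC_plus.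
  replace (u + (INR n + 1)) with (u + 1 + INR n) by ring.
  replace (v + (INR n + 1)) with (v + 1 + INR n) by ring.
  rewrite Ev in *. field. repeat split; auto.
Qed.

Lemma sum_n_term4F3 (n : nat) :
  sum_n term4F3 n
  = (u + 1) * (v + 1) / 2 * (sum_n term3F2 n - tail3F2 (S n)) :> C.
Proof.
  induction n as [|n IH].
  - rewrite !sum_O, term4F3_telescoping. unfold tail3F2. simpl INR. ring.
  - rewrite !sum_Sn, IH, (term4F3_telescoping (S n)). change plus with Cplus. ring.
Qed.

End HypergeometricTerms.

Close Scope C_scope.

Lemma Cmod_add_INR_ge (x : C) (n : nat) : INR n - Cmod x <= Cmod (x + INR n)%C.
Proof.
  pose proof (Cmod_triangle (x + INR n) (- x)) as H.
  replace (x + INR n + - x)%C with (RC (INR n)) in H by ring.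
  rewrite Cmod_opp, Cmod_R, Rabs_pos_eq in H by apply pos_INR. lra.
Qed.

Lemma eventually_INR_gt (A : R) : eventually (fun n => A < INR n).
Proof. exact (is_lim_seq_INR (fun x => A < x) (ex_intro _ A (fun x H => H))). Qed.

Lemma eventually_Cmod_shift_prod_ge (u v : C) : eventually (fun n =>
  (INR n + 1) * (INR n + 1) / 4 <= Cmod ((u + INR n) * (v + INR n))%C).
Proof.
  refine (filter_imp _ _ _ (eventually_INR_gt (2 * (Cmod u + Cmod v) + 1))).
  intros n Hn. rewrite Cmod_mult.
  pose proof (Cmod_add_INR_ge u n). pose proof (Cmod_add_INR_ge v n).
  pose proof (Cmod_ge_0 u). pose proof (Cmod_ge_0 v).
  replace ((INR n + 1) * (INR n + 1) / 4) with (((INR n + 1) / 2) * ((INR n + 1) / 2)) by field.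
  apply Rmult_le_compat; lra.
Qed.

Lemma eventually_Cmod_term3F2_le (u v : C) : eventually (fun n =>
  Cmod (term3F2 u v n) <= 4 * Cmod (u * v)%C / ((INR n + 1) * (INR n + 1))).
Proof.
  refine (filter_imp _ _ _ (eventually_Cmod_shift_prod_ge u v)).
  intros n Hn. pose proof (pos_INR n).
  assert (Hpos : 0 < (INR n + 1) * (INR n + 1) / 4) by nra.
  unfold term3F2. rewrite Cmod_div by (apply Cmod_gt_0; lra).
  replace (4 * Cmod (u * v)%C / ((INR n + 1) * (INR n + 1)))
    with (Cmod (u * v)%C / ((INR n + 1) * (INR n + 1) / 4)) by (field; lra).
  apply Rmult_le_compat_l; [apply Cmod_ge_0|]. apply Rinv_le_contravar; lra.
Qed.

Lemma eventually_Cmod_tail3F2_le (u v : C) : eventually (fun n =>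
  Cmod (tail3F2 u v n) <= 4 * Cmod (u * v)%C / (INR n + 1)).
Proof.
  refine (filter_imp _ _ _ (eventually_Cmod_term3F2_le u v)).
  intros n Hn. pose proof (pos_INR n). pose proof (Cmod_ge_0 (u * v)%C).
  unfold tail3F2. rewrite Cmod_mult, Cmod_R, Rabs_pos_eq by lra.
  apply Rle_trans with (INR n * (4 * Cmod (u * v)%C / ((INR n + 1) * (INR n + 1)))).
  - now apply Rmult_le_compat_l.
  - replace (4 * Cmod (u * v)%C / (INR n + 1))
      with ((INR n + 1) * (4 * Cmod (u * v)%C / ((INR n + 1) * (INR n + 1))))
      by (field; lra).
    apply Rmult_le_compat_r; [|lra].
    apply Rdiv_le_0_compat; nra.
Qed.

Lemma is_lim_seq_inv_succ : is_lim_seq (fun n => / (INR n + 1)) 0.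
Proof.
  apply (is_lim_seq_inv (fun n => INR n + 1) p_infty); [|discriminate].
  apply (is_lim_seq_ext (fun n => INR (S n))); [intros n; apply S_INR|].
  apply (is_lim_seq_incr_1 INR), is_lim_seq_INR.
Qed.

Lemma ex_series_inv_sqr : ex_series (fun n => / ((INR n + 1) * (INR n + 1))).
Proof.
  assert (Htele : is_series (fun n => / (INR n + 1) - / (INR n + 2)) 1).
  { change (is_lim_seq (sum_n (fun n => / (INR n + 1) - / (INR n + 2))) 1).
    apply (is_lim_seq_ext (fun n => 1 - / (INR (S n) + 1))).
    - intros n. induction n as [|n IH].
      + rewrite sum_O. simpl. field.
      + rewrite sum_Sn, <- IH, !S_INR. unfold plus; simpl.
        pose proof (pos_INR n). field; lra.
    - replace (Finite 1) with (Rbar_minus 1 0) by (simpl; f_equal; ring).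
      apply is_lim_seq_minus'; [apply is_lim_seq_const|].
      apply (is_lim_seq_incr_1 (fun n => / (INR n + 1))), is_lim_seq_inv_succ. }
  apply (@ex_series_le R_AbsRing R_CompleteNormedModule _
           (fun n => 2 * (/ (INR n + 1) - / (INR n + 2)))).
  - intros n. pose proof (pos_INR n).
    change (Rabs (/ ((INR n + 1) * (INR n + 1))) <= 2 * (/ (INR n + 1) - / (INR n + 2))).
    rewrite Rabs_pos_eq.
    + apply (Rmult_le_reg_l ((INR n + 1) * (INR n + 1) * (INR n + 2))); [nra|].
      field_simplify; nra.
    + apply Rlt_le, Rinv_0_lt_compat. nra.
  - exists (scal 2 1). exact (@is_series_scal_l R_AbsRing R_NormedModule 2 _ 1 Htele).
Qed.

Lemma ex_series_eventually_le {K : AbsRing} {V : CompleteNormedModule K}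
  (a : nat -> V) (b : nat -> R) :
  eventually (fun n => norm (a n) <= b n) -> ex_series b -> ex_series a.
Proof.
  intros [N HN] Hb.
  apply (ex_series_incr_n a N), (ex_series_le _ (fun k => b (N + k)%nat)).
  - intros k. apply HN. lia.
  - now apply (ex_series_incr_n b N).
Qed.

Lemma ex_series_term3F2 (u v : C) : ex_series (term3F2 u v).
Proof.
  apply (@ex_series_eventually_le C_AbsRing C_CompleteNormedModule _ _
           (eventually_Cmod_term3F2_le u v)).
  exact (@ex_series_scal_l R_AbsRing R_NormedModule _ _ ex_series_inv_sqr).
Qed.

Lemma tail3F2_succ_tendsto_0 (u v : C) :
  filterlim (fun n => tail3F2 u v (S n)) eventually (locally (RC 0)).
Proof.
  apply (filterlim_norm_zero (fun n => tail3F2 u v (S n))).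
  apply (is_lim_seq_incr_1 (fun n => Cmod (tail3F2 u v n)) 0).
  apply (is_lim_seq_le_le_loc (fun _ => 0) _ (fun n => 4 * Cmod (u * v)%C * / (INR n + 1))).
  - refine (filter_imp _ _ _ (eventually_Cmod_tail3F2_le u v)).
    intros n Hn. split; [apply Cmod_ge_0|exact Hn].
  - apply is_lim_seq_const.
  - replace (Finite 0) with (Rbar_mult (4 * Cmod (u * v)%C) 0) by (simpl; f_equal; ring).
    apply is_lim_seq_scal_l, is_lim_seq_inv_succ.
Qed.

Lemma is_series_term4F3 (u v L : C) :
  (u + v = 1)%C -> not_nonpos_int u -> not_nonpos_int v ->
  is_series (term3F2 u v) L ->
  is_series (term4F3 u v) ((u + 1) * (v + 1) / 2 * L)%C.
Proof.
  intros Huv Hu Hv HL.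
  set (K := ((u + 1) * (v + 1) / 2)%C).
  assert (Hlim : filterlim
            (fun n => scal K (plus (sum_n (term3F2 u v) n) (opp (tail3F2 u v (S n)))))
            eventually (locally (scal K (plus L (opp (RC 0)))))).
  { eapply filterlim_comp; [|apply (@filterlim_scal_r C_AbsRing C_NormedModule)].
    eapply filterlim_comp_2; [exact HL| |apply (@filterlim_plus C_AbsRing C_NormedModule)].
    eapply filterlim_comp;
      [apply tail3F2_succ_tendsto_0|apply (@filterlim_opp C_AbsRing C_NormedModule)]. }
  replace (K * L)%C with (scal K (plus L (opp (RC 0)))).
  - refine (filterlim_ext _ _ _ Hlim). intros n.
    symmetry. exact (sum_n_term4F3 u v Hu Hv Huv n).
  - change (K * (L + - RC 0) = K * L)%C. ring.
Qed.

Lemma Cseries_to_of_is_series (f : nat -> Cx) (s : Cx) :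
  is_series (fun n => toC (f n)) (toC s) -> Cseries_to f s.
Proof.
  intros H.
  assert (Hpart : forall n, toC (Cpartial f (S n)) = sum_n (fun k => toC (f k)) n).
  { induction n as [|n IH].
    - rewrite sum_O. unfold toC; simpl. f_equal; ring.
    - rewrite sum_Sn, <- IH. reflexivity. }
  split; apply is_lim_seq_Reals, is_lim_seq_incr_1.
  - apply (is_lim_seq_ext (fun n => fst (sum_n (fun k => toC (f k)) n))).
    { intros n. now rewrite <- Hpart. }
    eapply filterlim_comp; [exact H|apply continuous_fst].
  - apply (is_lim_seq_ext (fun n => snd (sum_n (fun k => toC (f k)) n))).
    { intros n. now rewrite <- Hpart. }
    eapply filterlim_comp; [exact H|apply continuous_snd].
Qed.

Lemma pFq_sum_one_of_is_series (alphas betas : list Cx) (s : Cx) :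
  is_series (chyp_term1 (map toC alphas) (map toC betas)) (toC s) ->
  pFq_sum alphas betas (RtoC 1) s.
Proof.
  intros H. apply Cseries_to_of_is_series.
  apply (is_series_ext (chyp_term1 (map toC alphas) (map toC betas))); [|exact H].
  intros n. symmetry. apply toC_hyp_term1.
Qed.

Open Scope C_scope.

Lemma is_series_hyp_4F3_3F2 (c : C) :
  2 * c <> RC 1 -> 2 * c <> RC (-1) ->
  not_nonpos_int (RC (3/2) - c) -> not_nonpos_int (RC (3/2) + c) ->
  exists L : C,
    is_series (chyp_term1 [RC 1; RC (1/2) - c; RC (1/2) + c]
                          [RC (3/2) - c; RC (3/2) + c]) L /\
    is_series (chyp_term1 [RC 2; RC 2; RC (1/2) + c; RC (1/2) - c]
                          [RC 1; RC (5/2) + c; RC (5/2) - c])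
              ((RC (3/2) - c) * (RC (3/2) + c) / 2 * L).
Proof.
  intros Hc1 Hc2 H3m H3p.
  set (u := RC (1/2) - c). set (v := RC (1/2) + c).
  assert (Hshift : RC (3/2) - c = u + 1 /\ RC (3/2) + c = v + 1
                   /\ RC (5/2) - c = u + 2 /\ RC (5/2) + c = v + 2
                   /\ 2 * c = 1 - 2 * u /\ 2 * c = 2 * v - 1 /\ u + v = 1).
  { unfold u, v. rewrite !RtoC_div by lra. repeat split; field. }
  destruct Hshift as (Hu1 & Hv1 & Hu2 & Hv2 & Ecu & Ecv & Huv).
  rewrite Hu1, Hv1, Hu2, Hv2 in *.
  assert (Hu : not_nonpos_int u).
  { apply not_nonpos_int_pred; [|exact H3m].
    intros E. apply Hc1. rewrite Ecu, E. ring. }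
  assert (Hv : not_nonpos_int v).
  { apply not_nonpos_int_pred; [|exact H3p].
    intros E. apply Hc2. rewrite Ecv, E. ring. }
  destruct (ex_series_term3F2 u v) as [L HL]. exists L. split.
  - apply (is_series_ext (term3F2 u v)); [|exact HL].
    intros n. symmetry. now apply chyp_term1_3F2.
  - apply (is_series_ext (term4F3 u v)); [|now apply is_series_term4F3].
    intros n. symmetry. now apply chyp_term1_4F3.
Qed.

Close Scope C_scope.

Lemma not_nonpos_int_toC (z : Cx) :
  (forall n : nat, z <> RtoC (- INR n)) -> not_nonpos_int (toC z).
Proof.
  intros H k E. apply (H k), toC_inj. rewrite toC_RtoC, RtoC_opp.
  replace (toC z) with (toC z + INR k - INR k)%C by ring. rewrite E. ring.
Qed.

Lemma toC_neq_RtoC (z : Cx) (x : R) : z <> RtoC x -> toC z <> RC x.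
Proof. intros H E. now apply H, toC_inj. Qed.

Theorem mainTheorem11 (a b : Cx) :
  Re b > 0 ->
  Re (Cadd b a) > 0 ->
  Re (Csub b a) > 0 ->
  (forall n : nat,
     Cadd (RtoC (3/2)) (Cdiv a (Cmul (RtoC 2) b)) <> RtoC (- INR n)) ->
  (forall n : nat,
     Csub (RtoC (3/2)) (Cdiv a (Cmul (RtoC 2) b)) <> RtoC (- INR n)) ->
  (forall k : Z, Cdiv a b <> RtoC (IZR (2 * k + 1))) ->
  exists s4 s3 : Cx,
    pFq_sum [RtoC 2; RtoC 2;
             Cadd (RtoC (1/2)) (Cdiv a (Cmul (RtoC 2) b));
             Csub (RtoC (1/2)) (Cdiv a (Cmul (RtoC 2) b))]
            [RtoC 1;
             Cadd (RtoC (5/2)) (Cdiv a (Cmul (RtoC 2) b));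
             Csub (RtoC (5/2)) (Cdiv a (Cmul (RtoC 2) b))]
            (RtoC 1) s4 /\
    pFq_sum [RtoC 1;
             Csub (RtoC (1/2)) (Cdiv a (Cmul (RtoC 2) b));
             Cadd (RtoC (1/2)) (Cdiv a (Cmul (RtoC 2) b))]
            [Csub (RtoC (3/2)) (Cdiv a (Cmul (RtoC 2) b));
             Cadd (RtoC (3/2)) (Cdiv a (Cmul (RtoC 2) b))]
            (RtoC 1) s3 /\
    s4 = Cmul (Cdiv (Csub (Cmul (RtoC 9) (Cmul b b)) (Cmul a a))
                    (Cmul (RtoC 8) (Cmul b b)))
              s3.
Proof.
  intros Hb _ _ Hplus Hminus Hodd.
  set (X := Cdiv a (Cmul (RtoC 2) b)) in *.
  assert (Hb0 : toC b <> 0%C) by (intros [= E _]; lra).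
  assert (Ha : toC a = (2 * toC X * toC b)%C)
    by (unfold X; rewrite toC_div, toC_mul, toC_RtoC; field; auto).
  assert (Hab : toC (Cdiv a b) = (2 * toC X)%C) by (rewrite toC_div, Ha; field; auto).
  destruct (is_series_hyp_4F3_3F2 (toC X)) as (L & H3 & H4).
  - rewrite <- Hab. exact (toC_neq_RtoC _ _ (Hodd 0%Z)).
  - rewrite <- Hab. exact (toC_neq_RtoC _ _ (Hodd (-1)%Z)).
  - exact (not_nonpos_int_toC _ Hminus).
  - exact (not_nonpos_int_toC _ Hplus).
  - exists (Cmul (Cdiv (Csub (Cmul (RtoC 9) (Cmul b b)) (Cmul a a))
                      (Cmul (RtoC 8) (Cmul b b))) (ofC L)), (ofC L).
    split; [|split; [|reflexivity]]; apply pFq_sum_one_of_is_series.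
    + rewrite toC_mul, toC_ofC, toC_div, !toC_sub, !toC_mul, !toC_RtoC, Ha.
      replace (_ / _)%C with ((RC (3/2) - toC X) * (RC (3/2) + toC X) / 2)%C
        by (rewrite RtoC_div by lra; field; auto).
      exact H4.
    + rewrite toC_ofC. exact H3.
Qed.
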